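(* Let $f\in\mathbb{C}_v(z)$ be a nonconstant rational function such that all poles and all type I critical points of $f$ lie in the Berkovich Fatou set of $f$. Then there exists $\epsilon>0$ such that for every $a\in\mathbb{C}_v$ with $D_{\mathrm{Berk}}(a,\epsilon)\cap\mathcal{J}_f\neq\varnothing$ and every $r$ with $0<r\le\epsilon$, $f$ maps $D(a,r)$ bijectively onto $D(f(a),|f'(a)|r)$.
   Context: $\mathbb{C}_v$ is an algebraically closed field of characteristic zero, complete with respect to a nontrivial non-archimedean absolute value. $D(a,r)=\{x\in\mathbb{C}_v:|x-a|<r\}$; $D_{\mathrm{Berk}}(a,r)=\{\zeta\in\mathbb{A}^1_{\mathrm{Berk}}:\|z-a\|_\zeta<r\}$, where points of the Berkovich affine line are multiplicative seminorms on $\mathbb{C}_v[z]$ extending $|\cdot|$. Berkovich Fatou set of $f$: points of $\mathbb{P}^1_{\mathrm{Berk}}$ having a neighborhood $V$ such that $\bigcup_{n\ge1}f^n(V)$ omits infinitely many points; the Berkovich Julia set $\mathcal{J}_f$ is its complement. *)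

From HB Require Import structures.
From mathcomp Require Import all_boot all_order all_algebra.
From mathcomp Require Import boolp classical_sets functions cardinality reals.
Set Implicit Arguments. Unset Strict Implicit. Unset Printing Implicit Defensive.
Import Order.TTheory GRing.Theory Num.Theory.
Local Open Scope classical_set_scope.
Local Open Scope ring_scope.

Section Defs.
Variables (R : realType) (K : closedFieldType) (abs : K -> R).

Definition is_nonarch_abs : Prop :=
  [/\ forall x, 0 <= abs x,
      forall x, abs x = 0 <-> x = 0,
      forall x y, abs (x * y) = abs x * abs y,
      forall x y, abs (x + y) <= Num.max (abs x) (abs y)
    & exists x, abs x != 0 /\ abs x != 1].

Definition abs_complete : Prop :=
  forall u : nat -> K,
    (forall e : R, 0 < e -> exists N, forall m n, (N <= m)%N -> (N <= n)%N ->
        abs (u m - u n) < e) ->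
    exists l, forall e : R, 0 < e -> exists N, forall n, (N <= n)%N ->
        abs (u n - l) < e.

Definition disk (a : K) (r : R) : set K := [set x | abs (x - a) < r].

Definition ratdeg (P Q : {poly K}) : nat := (maxn (size P) (size Q)).-1.

(* f evaluated at a finite point (meaningful when Q.[x] != 0) *)
Definition rat_eval (P Q : {poly K}) (x : K) : K := P.[x] / Q.[x].

Definition rat_deriv (P Q : {poly K}) (x : K) : K :=
  (P^`() * Q - P * Q^`()).[x] / (Q.[x] ^+ 2).

(* P^1(C_v) = option K, None = infinity; classical action of f *)
Definition rat_P1 (P Q : {poly K}) (x : option K) : option K :=
  match x with
  | Some x => if Q.[x] == 0 then None else Some (rat_eval P Q x)
  | None => if (size Q < size P)%N then None
            else if size P == size Q then Some (lead_coef P / lead_coef Q)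
            else Some 0
  end.

Definition is_pole (P Q : {poly K}) (x : option K) : Prop := rat_P1 P Q x = None.

(* Wronskian numerator of the derivative of P/Q; its roots are exactly the
   finite points where f (or 1/f at poles) has vanishing derivative. *)
Definition wronsk (P Q : {poly K}) : {poly K} := P^`() * Q - P * Q^`().

(* coordinate change w = 1/z: f(1/w) = rev_d P / rev_d Q, d = deg f *)
Definition revd (d : nat) (P : {poly K}) : {poly K} := \poly_(i < d.+1) P`_(d - i).

(* type I critical point of f in P^1(C_v): the derivative of f in local
   coordinates (z or 1/z at the source, w or 1/w at the target) vanishes. *)
Definition is_crit (P Q : {poly K}) (x : option K) : Prop :=
  match x with
  | Some x => root (wronsk P Q) x
  | None => root (wronsk (revd (ratdeg P Q) P) (revd (ratdeg P Q) Q)) 0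
  end.

(* points of A^1_Berk: multiplicative seminorms on K[z] extending abs *)
Definition is_berk (z : {poly K} -> R) : Prop :=
  [/\ forall c, z c%:P = abs c,
      forall p, 0 <= z p,
      forall p q, z (p * q) = z p * z q
    & forall p q, z (p + q) <= z p + z q].

(* P^1_Berk = A^1_Berk together with infinity (None) *)
Definition berkP1 := option ({poly K} -> R).
Definition is_berkP1 (p : berkP1) : Prop :=
  match p with Some z => is_berk z | None => True end.

Definition typeI (a : K) : {poly K} -> R := fun g => abs g.[a].
Definition typeI_P1 (x : option K) : berkP1 :=
  match x with Some a => Some (typeI a) | None => None end.

Definition berk_disk (a : K) (r : R) : set ({poly K} -> R) :=
  [set z | is_berk z /\ z ('X - a%:P) < r].

(* Topology of P^1_Berk: A^1_Berk carries the weakest topology making all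
   z |-> z g continuous (basic opens: finite intersections of
   {a < z g < b}); P^1_Berk is its one-point compactification, where
   {infinity} u {z | z X > M} form a neighbourhood basis of infinity. *)
Definition berk_nbhd (p : berkP1) (V : set berkP1) : Prop :=
  match p with
  | Some z => exists s : seq ({poly K} * R * R),
      (forall t, t \in s -> t.1.2 < z t.1.1 < t.2) /\
      forall w, is_berk w ->
        (forall t, t \in s -> t.1.2 < w t.1.1 < t.2) -> V (Some w)
  | None => exists M : R, V None /\
      forall w, is_berk w -> M < w 'X -> V (Some w)
  end.

(* g(P/Q) homogenized: Q^{deg g} g(P/Q) *)
Definition hcomp (g P Q : {poly K}) : {poly K} :=
  \sum_(i < size g) g`_i *: (P ^+ i * Q ^+ ((size g).-1 - i)).

(* action of f on P^1_Berk: ||g||_{f(z)} = ||g o f||_z *)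
Definition berk_map (P Q : {poly K}) (p : berkP1) : berkP1 :=
  match p with
  | Some z => if z Q == 0 then None
              else Some (fun g => z (hcomp g P Q) / z Q ^+ (size g).-1)
  | None => typeI_P1 (rat_P1 P Q None)
  end.

Definition berk_fatou (P Q : {poly K}) (p : berkP1) : Prop :=
  is_berkP1 p /\
  exists V : set berkP1, V `<=` is_berkP1 /\ berk_nbhd p V /\
    infinite_set (is_berkP1 `\`
       [set q | exists n p', V p' /\ q = iter n.+1 (berk_map P Q) p']).

Definition berk_julia (P Q : {poly K}) (p : berkP1) : Prop :=
  is_berkP1 p /\ ~ berk_fatou P Q p.

End Defs.

From HB Require Import structures.
From mathcomp Require Import all_boot all_order all_algebra.
From mathcomp Require Import boolp classical_sets functions cardinality reals.
From mathcomp Require Import ring lra.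
Set Implicit Arguments. Unset Strict Implicit. Unset Printing Implicit Defensive.
Import Order.TTheory GRing.Theory Num.Theory.
Local Open Scope classical_set_scope.
Local Open Scope ring_scope.

(* A map which is approximately linear on a disk,
   |f(x) - f(x') - L (x - x')| <= |L|/2 |x - x'|, scales distances by |L| and,
   by completeness and the contraction principle, is onto the image disk
   (approx_linear_bij). Taylor bounds for polynomials make P/Q approximately
   linear with slope f'(a) on disks whose radius only depends on lower bounds
   for |Q(a)| and for the Wronskian |W(a)| = |P'Q - PQ'|(a)
   (uniform_approx_linear). The Fatou set being open, the roots of Q and W
   (poles and critical points) have Berkovich neighbourhoods made of Fatou
   points, so near the Julia set |Q| and |W| are bounded below
   (julia_root_bounds). Near infinity, either infinity is a Fatou point and the
   relevant centres are bounded, or f is regular and unramified there and the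
   change of variable z |-> 1/z reduces to the previous case (far_region_bij). *)

Lemma bernoulli (F : realFieldType) (u : F) n : 0 <= u -> 1 + n%:R * u <= (1 + u) ^+ n.
Proof.
move=> hu; elim: n => [|n IH]; first by rewrite mul0r addr0 expr0.
have hnu : 0 <= n%:R * u * u by rewrite mulr_ge0 ?mulr_ge0.
have h1 : 1 + n.+1%:R * u <= (1 + u) * (1 + n%:R * u).
  by rewrite mulrSr; nra.
by rewrite exprS; apply: le_trans h1 _; rewrite ler_wpM2l //; lra.
Qed.

Lemma geometric_small (F : archiRealFieldType) (q e : F) :
  0 <= q -> q < 1 -> 0 < e -> exists N : nat, q ^+ N < e.
Proof.
move=> hq0 hq1 he; have [->|hq] := eqVneq q 0; first by exists 1%N; rewrite expr1.
have hqp : 0 < q by rewrite lt_def hq hq0.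
set u := q^-1 - 1; have hu : 0 < u by rewrite subr_gt0 invf_gt1.
have hb : 0 <= (e * u)^-1 by rewrite invr_ge0 mulr_ge0 // ltW.
set N := Num.Def.archi_bound ((e * u)^-1); exists N.
have hNu : e^-1 < N%:R * u by rewrite -ltr_pdivrMr // -invfM; exact: archi_boundP.
have hpow : e^-1 < (q^-1) ^+ N.
  have := bernoulli N (ltW hu); rewrite [1 + u]addrC subrK; lra.
by move: hpow; rewrite exprVn ltf_pV2 // posrE ?exprn_gt0.
Qed.

Lemma quotient_difference (F : fieldType) (px px' qx qx' qa w h : F) :
  qx != 0 -> qx' != 0 -> qa != 0 ->
  px / qx - px' / qx' - w / qa ^+ 2 * h =
  ((px * qx' - px' * qx - w * h) * qa ^+ 2 + w * h * (qa ^+ 2 - qx * qx'))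
    / (qx * qx' * qa ^+ 2).
Proof. by move=> hx hx' ha; field; rewrite hx hx' ha. Qed.

Section RationalFunctions.
Variable K : closedFieldType.

Lemma deriv_eq0_const (hchar : [pchar K] =i pred0) (p : {poly K}) :
  p^`() = 0 -> (size p <= 1)%N.
Proof.
move=> hd; apply/leq_sizeP => -[//|j] _.
have /eqP := congr1 (fun q : {poly K} => q`_j) hd.
rewrite coef_deriv coef0 -mulr_natr mulf_eq0 => /orP [/eqP //|].
by case: (pcharf0P K) => + _ => /(_ hchar) ->.
Qed.

Lemma wronsk_neq0 (hchar : [pchar K] =i pred0) (P Q : {poly K}) :
  Q != 0 -> coprimep P Q -> (1 <= ratdeg P Q)%N -> wronsk P Q != 0.
Proof.
move=> hQ hcop hnc; apply/negP => /eqP hW.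
have hPQ : P^`() * Q = P * Q^`() by apply/eqP; rewrite -subr_eq0 -/(wronsk P Q) hW.
have hQd : Q^`() = 0.
  apply/eqP/negPn/negP => hQd.
  have : (Q %| P * Q^`())%R by rewrite -hPQ dvdp_mull.
  rewrite Gauss_dvdpr 1?coprimep_sym // => /(dvdp_leq hQd).
  by rewrite leqNgt lt_size_deriv.
have hPd : P^`() = 0.
  by move: hPQ; rewrite hQd mulr0 => /eqP; rewrite mulf_eq0 (negbTE hQ) orbF => /eqP.
move: hnc (deriv_eq0_const hchar hQd) (deriv_eq0_const hchar hPd); rewrite /ratdeg.
by case: (size P) => [|[|]] //; case: (size Q) => [|[|]].
Qed.

Lemma revd_horner (d : nat) (p : {poly K}) (x : K) :
  x != 0 -> (size p <= d.+1)%N -> (revd d p).[x^-1] * x ^+ d = p.[x].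
Proof.
move=> hx hs; rewrite /revd horner_poly (horner_coef_wide _ hs) mulr_suml.
rewrite [RHS](reindex_inj rev_ord_inj) /=; apply: eq_bigr => i _.
have hi : (i <= d)%N by rewrite -ltnS.
by rewrite subSS exprVn -mulrA exprB ?unitfE // [x ^- i * _]mulrC.
Qed.

Lemma revd_horner0 (d : nat) (p : {poly K}) : (revd d p).[0] = p`_d.
Proof. by rewrite horner_coef0 /revd coef_poly /= subn0. Qed.

Lemma rat_eval_revd (d : nat) (P Q : {poly K}) (x : K) :
  x != 0 -> (size P <= d.+1)%N -> (size Q <= d.+1)%N ->
  rat_eval P Q x = rat_eval (revd d P) (revd d Q) x^-1.
Proof.
move=> hx hP hQ; rewrite /rat_eval -(revd_horner hx hP) -(revd_horner hx hQ).
have hxd : x ^+ d != 0 by rewrite expf_neq0.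
have [->|hq] := eqVneq (revd d Q).[x^-1] 0; first by rewrite mul0r !invr0 !mulr0.
by field; rewrite hq hxd.
Qed.

Lemma root_of_factor (p : {poly K}) (rs : seq K) (c : K) :
  p = lead_coef p *: \prod_(z <- rs) ('X - z%:P) -> c \in rs -> p.[c] = 0.
Proof.
move=> hp hc; rewrite hp hornerZ horner_prod; apply/eqP.
rewrite mulf_eq0 prodf_seq_eq0; apply/orP; right; apply/hasP; exists c => //.
by rewrite hornerXsubC subrr eqxx.
Qed.

End RationalFunctions.

Section NonArchimedean.
Variables (R : realType) (K : closedFieldType) (abs : K -> R).
Hypothesis habs : is_nonarch_abs abs.

Lemma abs_ge0 x : 0 <= abs x. Proof. by case: habs. Qed.
Lemma abs_eq0 x : abs x = 0 <-> x = 0. Proof. by case: habs. Qed.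
Lemma absM x y : abs (x * y) = abs x * abs y. Proof. by case: habs. Qed.
Lemma absD x y : abs (x + y) <= Num.max (abs x) (abs y). Proof. by case: habs. Qed.
Lemma abs0 : abs 0 = 0. Proof. exact/abs_eq0. Qed.

Lemma abs_gt0 x : x != 0 -> 0 < abs x.
Proof. by move=> hx; rewrite lt_def abs_ge0 andbT; apply: contra hx => /eqP/abs_eq0 ->. Qed.

Lemma abs_neq0 x : abs x != 0 -> x != 0.
Proof. by apply: contra => /eqP ->; rewrite abs0. Qed.

Lemma abs1 : abs 1 = 1.
Proof.
have h1 : abs 1 != 0 := lt0r_neq0 (abs_gt0 (oner_neq0 K)).
by apply: (mulIf h1) => /=; rewrite mul1r -absM mul1r.
Qed.

Lemma absN x : abs (- x) = abs x.
Proof.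
have hm1 : abs (-1) = 1.
  have h : abs (-1) ^+ 2 = 1 ^+ 2 by rewrite expr2 -absM mulrNN mulr1 abs1 expr1n.
  by apply/eqP; rewrite -(@eqrXn2 _ 2) ?abs_ge0 ?ler01 // h.
by rewrite -mulN1r absM hm1 mul1r.
Qed.

Lemma abs_subC x y : abs (x - y) = abs (y - x).
Proof. by rewrite -absN opprB. Qed.

Lemma absD_le x y b : abs x <= b -> abs y <= b -> abs (x + y) <= b.
Proof. by move=> hx hy; apply: le_trans (absD x y) _; rewrite ge_max hx hy. Qed.

Lemma absD_lt x y b : abs x < b -> abs y < b -> abs (x + y) < b.
Proof. by move=> hx hy; apply: le_lt_trans (absD x y) _; rewrite gt_max hx hy. Qed.

Lemma absB_le x y b : abs x <= b -> abs y <= b -> abs (x - y) <= b.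
Proof. by move=> hx hy; apply: absD_le; rewrite ?absN. Qed.

Lemma dist_trans_le x y z b :
  abs (x - y) <= b -> abs (y - z) <= b -> abs (x - z) <= b.
Proof. by move=> h1 h2; rewrite -(subrKA y); apply: absD_le. Qed.

Lemma dist_trans_lt x y z b :
  abs (x - y) < b -> abs (y - z) < b -> abs (x - z) < b.
Proof. by move=> h1 h2; rewrite -(subrKA y); apply: absD_lt. Qed.

Lemma abs_isosceles u v : abs (u - v) < abs v -> abs u = abs v.
Proof.
move=> h; apply/eqP; rewrite eq_le; apply/andP; split.
  by rewrite -(subrK v u); apply: absD_le; rewrite ?lexx // ltW.
rewrite leNgt; apply/negP => hu.
have : abs (u - (u - v)) < abs v by apply: absD_lt; rewrite ?absN.
by rewrite opprB addrC subrK ltxx.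
Qed.

Lemma absX x n : abs (x ^+ n) = abs x ^+ n.
Proof. by elim: n => [|n IH]; rewrite ?expr0 ?abs1 // !exprS absM IH. Qed.

Lemma absV x : abs x^-1 = (abs x)^-1.
Proof.
have [->|hx] := eqVneq x 0; first by rewrite invr0 abs0 invr0.
have hx0 : abs x != 0 := lt0r_neq0 (abs_gt0 hx).
by apply: (mulfI hx0); rewrite -absM !mulfV // abs1.
Qed.

Lemma abs_div x y : abs (x / y) = abs x / abs y.
Proof. by rewrite absM absV. Qed.

Lemma abs_natr n : abs n%:R <= 1.
Proof.
by elim: n => [|n IH]; rewrite ?abs0 ?ler01 // mulrS; apply: absD_le; rewrite ?abs1.
Qed.

Lemma abs_mulrn x n : abs (x *+ n) <= abs x.
Proof. by rewrite -mulr_natr absM ler_piMr ?abs_ge0 ?abs_natr. Qed.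

Lemma abs_sum_le (I : Type) (s : seq I) (F : I -> K) (b : R) :
  0 <= b -> (forall i, abs (F i) <= b) -> abs (\sum_(i <- s) F i) <= b.
Proof.
move=> hb hF; elim: s => [|i s IH]; first by rewrite big_nil abs0.
by rewrite big_cons; apply: absD_le.
Qed.

Lemma abs_prod (I : Type) (s : seq I) (F : I -> K) :
  abs (\prod_(i <- s) F i) = \prod_(i <- s) abs (F i).
Proof. by elim: s => [|i s IH]; rewrite ?big_nil ?abs1 // !big_cons absM IH. Qed.

Lemma abs_mul_le u v (bu bv : R) : abs u <= bu -> abs v <= bv -> abs (u * v) <= bu * bv.
Proof. by move=> hu hv; rewrite absM; apply: ler_pM; rewrite ?abs_ge0. Qed.

Lemma small_elt (e : R) : 0 < e -> exists h : K, 0 < abs h < e.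
Proof.
move=> he; case: habs => _ _ _ _ [x [hx0 hx1]].
have [t ht0 ht1] : exists2 t : K, 0 < abs t & abs t < 1.
  have hxp : 0 < abs x by rewrite lt_def hx0 abs_ge0.
  have [hlt|hgt] := ltP (abs x) 1; first by exists x.
  by exists x^-1; rewrite absV ?invr_gt0 // invf_lt1 // lt_def hx1 hgt.
have [N hN] := geometric_small (ltW ht0) ht1 he.
by exists (t ^+ N); rewrite absX hN andbT exprn_gt0.
Qed.

Definition approx_linear (f : K -> K) (a : K) (eps : R) (L : K) (c : R) : Prop :=
  forall x x', abs (x - a) < eps -> abs (x' - a) < eps ->
    abs (f x - f x' - L * (x - x')) <= c * abs (x - x').

Lemma approx_linear_dist f a eps L x x' :
  L != 0 -> approx_linear f a eps L (2^-1 * abs L) ->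
  abs (x - a) < eps -> abs (x' - a) < eps -> abs (f x - f x') = abs L * abs (x - x').
Proof.
move=> hL hf hx hx'; have [<-|hne] := eqVneq x x'; first by rewrite !subrr abs0 mulr0.
rewrite -absM; apply: abs_isosceles; apply: le_lt_trans (hf _ _ hx hx') _.
rewrite absM -mulrA gtr_pMl ?invf_lt1 ?ltr1n //.
by rewrite mulr_gt0 ?abs_gt0 // subr_eq0.
Qed.

Lemma approx_linear_le f a eps L c c' :
  c <= c' -> approx_linear f a eps L c -> approx_linear f a eps L c'.
Proof.
move=> hc hf x x' hx hx'; apply: le_trans (hf _ _ hx hx') _.
by apply: ler_wpM2r; first exact: abs_ge0.
Qed.

Lemma approx_linear_abs_unique f a e1 e2 L1 L2 c1 c2 :
  0 < e1 -> 0 < e2 -> c1 < abs L1 -> c2 < abs L1 ->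
  approx_linear f a e1 L1 c1 -> approx_linear f a e2 L2 c2 -> abs L2 = abs L1.
Proof.
move=> he1 he2 hc1 hc2 hf1 hf2.
have hmin : 0 < Num.min e1 e2 by rewrite lt_min he1 he2.
have [h /andP [hh0 hhe]] := small_elt hmin.
have ha e : 0 < e -> abs (a - a) < e by rewrite subrr abs0.
have eh : a + h - a = h by rewrite addrAC subrr add0r.
have he1' : abs h < e1 by apply: lt_le_trans hhe _; rewrite ge_min lexx.
have he2' : abs h < e2 by apply: lt_le_trans hhe _; rewrite ge_min lexx orbT.
have := hf1 (a + h) a; have := hf2 (a + h) a; rewrite eh => h2 h1.
have {h1}h1 := h1 he1' (ha _ he1); have {h2}h2 := h2 he2' (ha _ he2).
apply: abs_isosceles; rewrite -(ltr_pM2r hh0) -absM.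
have -> : (L2 - L1) * h = (f (a + h) - f a - L1 * h) - (f (a + h) - f a - L2 * h) by ring.
apply: absD_lt; rewrite ?absN; [apply: le_lt_trans h1 _|apply: le_lt_trans h2 _];
  by rewrite ltr_pM2r.
Qed.

Lemma approx_linear_inv (g : K -> K) (eps0 : R) (L0 a : K) :
  0 < eps0 -> approx_linear g 0 eps0 L0 (2^-1 * abs L0) -> 2 + eps0^-1 <= abs a ->
  approx_linear (fun x => g x^-1) a 1 (- L0 / a ^+ 2) (2^-1 * abs (- L0 / a ^+ 2)).
Proof.
move=> heps hg ha x x' hx hx'.
have hinv : 0 < eps0^-1 by rewrite invr_gt0.
have ha0 : 0 < abs a by lra.
have near z : abs (z - a) < 1 -> abs z = abs a.
  by move=> hz; apply: abs_isosceles; apply: lt_le_trans hz _; lra.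
have nz z : abs (z - a) < 1 -> z != 0.
  by move=> hz; apply: abs_neq0; rewrite near // gt_eqF.
have small z : abs (z - a) < 1 -> abs (z^-1 - 0) < eps0.
  move=> hz; rewrite subr0 absV near // -[eps0]invrK ltf_pV2 ?posrE //; lra.
have -> : g x^-1 - g x'^-1 - - L0 / a ^+ 2 * (x - x') =
    (g x^-1 - g x'^-1 - L0 * (x^-1 - x'^-1))
      - L0 * (x - x') * (a ^+ 2 - x * x') / (x * x' * a ^+ 2).
  by field; rewrite (nz _ hx) (nz _ hx') (abs_neq0 (lt0r_neq0 ha0)).
have hLh : 0 <= abs L0 * abs (x - x') by rewrite mulr_ge0 ?abs_ge0.
apply: absD_le.
  apply: le_trans (hg _ _ (small _ hx) (small _ hx')) _.
  have -> : x^-1 - x'^-1 = (x' - x) / (x * x') by field; rewrite (nz _ hx) (nz _ hx').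
  rewrite !abs_div absM absN absX (near _ hx) (near _ hx') abs_subC.
  by rewrite le_eqVlt; apply/orP; left; apply/eqP; rewrite expr2; field; rewrite gt_eqF.
have hq : abs (a ^+ 2 - x * x') <= abs a.
  have -> : a ^+ 2 - x * x' = a * (a - x') + x' * (a - x) by ring.
  apply: absD_le; rewrite absM ?(near _ hx') -[X in _ <= X]mulr1 ler_wpM2l ?abs_ge0 //;
    by rewrite abs_subC ltW.
have hden : abs (x * x' * a ^+ 2) = abs a ^+ 4.
  by rewrite absM absM absX (near _ hx) (near _ hx'); ring.
have hL : abs (- L0 / a ^+ 2) = abs L0 / abs a ^+ 2 by rewrite abs_div absN absX.
rewrite absN abs_div hden hL absM absM ler_pdivrMr ?exprn_gt0 //.
have -> : 2^-1 * (abs L0 / abs a ^+ 2) * abs (x - x') * abs a ^+ 4 =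
    abs L0 * abs (x - x') * abs a * (abs a / 2) by field; rewrite gt_eqF.
apply: le_trans (ler_wpM2l hLh hq) _; rewrite -[X in X <= _]mulr1.
by apply: ler_wpM2l; [rewrite mulr_ge0 ?abs_ge0|rewrite ler_pdivlMr //; lra].
Qed.

(* Crude polynomial bounds: cbd p is the sum of the absolute values of the
   coefficients of p, and pbound p A bounds p and all its normalized
   derivatives on the closed disk of radius A >= 1. *)
Definition cbd (p : {poly K}) : R := \sum_(i < size p) abs p`_i.

Definition pbound (p : {poly K}) (A : R) : R := cbd p * A ^+ size p.

Lemma cbd_ge0 (p : {poly K}) : 0 <= cbd p.
Proof. by apply: sumr_ge0 => i _; exact: abs_ge0. Qed.

Lemma coef_le_cbd (p : {poly K}) j : abs p`_j <= cbd p.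
Proof.
have [hj|hj] := ltnP j (size p); last by rewrite nth_default // abs0 cbd_ge0.
rewrite /cbd (bigD1 (Ordinal hj)) //= lerDl.
by apply: sumr_ge0 => i _; exact: abs_ge0.
Qed.

Lemma pbound_ge0 (p : {poly K}) A : 1 <= A -> 0 <= pbound p A.
Proof. by move=> hA; rewrite mulr_ge0 ?cbd_ge0 ?exprn_ge0 // (le_trans ler01). Qed.

Lemma horner_le (q : {poly K}) (B A : R) n x : 1 <= A -> 0 <= B -> abs x <= A ->
  (size q <= n)%N -> (forall j, abs q`_j <= B) -> abs q.[x] <= B * A ^+ n.
Proof.
move=> hA hB hx hs hc; have hA0 : 0 <= A by apply: le_trans hA.
rewrite (horner_coef_wide x hs); apply: abs_sum_le; first by rewrite mulr_ge0 ?exprn_ge0.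
move=> i; rewrite absM absX; apply: ler_pM; rewrite ?exprn_ge0 ?abs_ge0 //.
apply: le_trans (lerXn2r _ _ _ hx) _; rewrite ?nnegrE ?abs_ge0 //.
by apply: ler_weXn2l => //; apply: ltnW.
Qed.

Lemma nderivn_pbound (p : {poly K}) i A x : 1 <= A -> abs x <= A ->
  abs (p^`N(i)).[x] <= pbound p A.
Proof.
move=> hA hx; apply: horner_le; rewrite ?cbd_ge0 //.
  apply/leq_sizeP => j hj; rewrite coef_nderivn nth_default ?mul0rn //.
  by apply: leq_trans hj _; rewrite leq_addl.
by move=> j; rewrite coef_nderivn; apply: le_trans (abs_mulrn _ _) (coef_le_cbd _ _).
Qed.

Lemma horner_pbound (p : {poly K}) A x : 1 <= A -> abs x <= A -> abs p.[x] <= pbound p A.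
Proof. by rewrite -[p in p.[x]]nderivn0; exact: nderivn_pbound. Qed.

Lemma deriv_pbound (p : {poly K}) A x : 1 <= A -> abs x <= A ->
  abs (p^`()).[x] <= pbound p A.
Proof. by rewrite -nderivn1; exact: nderivn_pbound. Qed.

Lemma taylor2 (p : {poly K}) x h A : 1 <= A -> abs x <= A -> abs h <= 1 ->
  abs (p.[x + h] - p.[x] - p^`().[x] * h) <= pbound p A * abs h ^+ 2.
Proof.
move=> hA hx hh.
have -> : p.[x + h] - p.[x] - p^`().[x] * h =
    \sum_(i < size p) p^`N(i.+2).[x] * h ^+ i.+2.
  rewrite (@nderiv_taylor_wide _ (size p).+2 p x h (mulrC x h)) ?leqW //.
  rewrite big_ord_recl big_ord_recl /= nderivn0 nderivn1 expr0 mulr1 expr1.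
  under eq_bigr => i _ do rewrite /bump /= !add1n.
  ring.
apply: abs_sum_le; first by rewrite mulr_ge0 ?pbound_ge0 ?exprn_ge0 ?abs_ge0.
move=> i; rewrite absM absX; apply: ler_pM; rewrite ?exprn_ge0 ?abs_ge0 //.
  exact: nderivn_pbound.
by rewrite -(addn2 i) exprD ler_piMl ?exprn_ge0 ?exprn_ile1 ?abs_ge0.
Qed.

Lemma le_bound_of_near (x a : K) (A e : R) :
  1 <= A -> e <= 1 -> abs a <= A -> abs (x - a) < e -> abs x <= A.
Proof.
move=> hA he ha hx; rewrite -(subrK a x); apply: absD_le => //.
by apply: le_trans (ltW hx) _; apply: le_trans he hA.
Qed.

Lemma poly_lipschitz (p : {poly K}) (a : K) (A B eps : R) x :
  1 <= A -> abs a <= A -> eps <= 1 -> pbound p A <= B ->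
  abs (x - a) < eps -> abs (p.[x] - p.[a]) <= B * eps.
Proof.
move=> hA ha heps hB hx; have hB0 : 0 <= B := le_trans (pbound_ge0 p hA) hB.
have hx1 : abs (x - a) <= 1 by apply: le_trans (ltW hx) heps.
have -> : p.[x] - p.[a] = (p.[a + (x - a)] - p.[a] - p^`().[a] * (x - a))
    + p^`().[a] * (x - a) by rewrite subrK (addrC a) subrK.
apply: absD_le.
  apply: le_trans (taylor2 p hA ha hx1) _; rewrite expr2 mulrA.
  apply: ler_pM; [exact: mulr_ge0 (pbound_ge0 p hA) (abs_ge0 _)|exact: abs_ge0| |exact: ltW].
  by apply: le_trans _ hB; rewrite ler_piMr ?pbound_ge0.
by apply: abs_mul_le; [exact: le_trans (deriv_pbound p hA ha) hB | exact: ltW].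
Qed.

Lemma poly_approx_linear (p : {poly K}) (a : K) (A B eps : R) :
  1 <= A -> abs a <= A -> eps <= 1 -> pbound p A <= B -> pbound p^`() A <= B ->
  approx_linear (horner p) a eps p^`().[a] (B * eps).
Proof.
move=> hA ha heps hB hB' x x' hx hx' /=.
have hx'A := le_bound_of_near hA heps ha hx'.
have hh : abs (x - x') < eps by apply: (dist_trans_lt (y := a)); rewrite // abs_subC.
have hh1 : abs (x - x') <= 1 := le_trans (ltW hh) heps.
have -> : p.[x] - p.[x'] - p^`().[a] * (x - x') =
    (p.[x' + (x - x')] - p.[x'] - p^`().[x'] * (x - x'))
    + (p^`().[x'] - p^`().[a]) * (x - x') by rewrite (addrC x') subrK; ring.
apply: absD_le.
  apply: le_trans (taylor2 p hA hx'A hh1) _; rewrite expr2 mulrA.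
  apply: ler_wpM2r; first exact: abs_ge0.
  by apply: ler_pM; rewrite ?(pbound_ge0 p hA) ?abs_ge0 // ltW.
rewrite mulrC absM mulrC; apply: ler_wpM2r; first exact: abs_ge0.
exact: poly_lipschitz hA ha heps hB' hx'.
Qed.

Lemma wronsk_horner (P Q : {poly K}) x :
  (wronsk P Q).[x] = P^`().[x] * Q.[x] - P.[x] * Q^`().[x].
Proof. by rewrite /wronsk !hornerE. Qed.

Section RationalNear.
Variables (P Q : {poly K}) (a : K) (A B eps : R).
Hypotheses (hA : 1 <= A) (ha : abs a <= A) (heps : eps <= 1).
Hypotheses (hBP : pbound P A <= B) (hBQ : pbound Q A <= B).
Hypotheses (hBP' : pbound P^`() A <= B) (hBQ' : pbound Q^`() A <= B).
Hypothesis hQa : B * eps < abs Q.[a].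

Let bound_near (p : {poly K}) z :
  pbound p A <= B -> abs (z - a) < eps -> abs p.[z] <= B.
Proof.
move=> hp hz; apply: le_trans (horner_pbound p hA _) hp.
exact: le_bound_of_near hA heps ha hz.
Qed.

Lemma rat_denominator_stable x : abs (x - a) < eps -> abs Q.[x] = abs Q.[a].
Proof.
move=> hx; apply: abs_isosceles; apply: le_lt_trans hQa.
exact: poly_lipschitz hA ha heps hBQ hx.
Qed.

Lemma cross_difference_error x x' : abs (x - a) < eps -> abs (x' - a) < eps ->
  abs (P.[x] * Q.[x'] - P.[x'] * Q.[x] - (wronsk P Q).[a] * (x - x'))
    <= B * B * eps * abs (x - x').
Proof.
move=> hx hx'; set h := x - x'.
have hEP := poly_approx_linear hA ha heps hBP hBP' hx hx'.
have hEQ := poly_approx_linear hA ha heps hBQ hBQ' hx hx'.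
have hPx' := bound_near hBP hx'; have hQx' := bound_near hBQ hx'.
have hP'a : abs P^`().[a] <= B by apply: le_trans (horner_pbound _ hA ha) hBP'.
have hQ'a : abs Q^`().[a] <= B by apply: le_trans (horner_pbound _ hA ha) hBQ'.
have hdP := poly_lipschitz hA ha heps hBP hx'.
have hdQ := poly_lipschitz hA ha heps hBQ hx'.
rewrite wronsk_horner.
have -> : P.[x] * Q.[x'] - P.[x'] * Q.[x] - (P^`().[a] * Q.[a] - P.[a] * Q^`().[a]) * h
  = (P^`().[a] * (Q.[x'] - Q.[a]) * h - (P.[x'] - P.[a]) * Q^`().[a] * h)
    + ((P.[x] - P.[x'] - P^`().[a] * h) * Q.[x'] - P.[x'] * (Q.[x] - Q.[x'] - Q^`().[a] * h)).
  by rewrite /h; ring.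
have e1 : B * B * eps * abs h = B * (B * eps) * abs h by ring.
have e2 : B * B * eps * abs h = B * eps * B * abs h by ring.
have e3 : B * B * eps * abs h = B * eps * abs h * B by ring.
have e4 : B * B * eps * abs h = B * (B * eps * abs h) by ring.
apply: absD_le; apply: absB_le.
- by rewrite absM e1; apply: ler_wpM2r; [exact: abs_ge0|exact: abs_mul_le].
- by rewrite absM e2; apply: ler_wpM2r; [exact: abs_ge0|exact: abs_mul_le].
- by rewrite e3; apply: abs_mul_le.
- by rewrite e4; apply: abs_mul_le.
Qed.

Lemma rat_approx_linear :
  approx_linear (rat_eval P Q) a eps (rat_deriv P Q a) (B ^+ 4 * eps / abs Q.[a] ^+ 4).
Proof.
move=> x x' hx hx'; set h := x - x'; set q := abs Q.[a].
have hB0 : 0 <= B := le_trans (pbound_ge0 P hA) hBP.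
have hq : 0 < q.
  by apply: le_lt_trans hQa; rewrite mulr_ge0 // ltW // (le_lt_trans (abs_ge0 _) hx).
have nz z : abs z = q -> z != 0 by move=> hz; apply: abs_neq0; rewrite hz gt_eqF.
have hQx := rat_denominator_stable hx; have hQx' := rat_denominator_stable hx'.
have hqB : abs Q.[a] <= B by apply: le_trans (horner_pbound Q hA ha) hBQ.
have hW : abs (wronsk P Q).[a] <= B * B.
  rewrite wronsk_horner; apply: absB_le; apply: abs_mul_le => //;
    by apply: le_trans (horner_pbound _ hA ha) _.
have hQ2 : abs (Q.[a] ^+ 2 - Q.[x] * Q.[x']) <= B * (B * eps).
  have -> : Q.[a] ^+ 2 - Q.[x] * Q.[x'] =
      Q.[a] * (Q.[a] - Q.[x']) + Q.[x'] * (Q.[a] - Q.[x]) by ring.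
  apply: absD_le; apply: abs_mul_le; rewrite ?hQx' // abs_subC.
    exact: poly_lipschitz hA ha heps hBQ hx'.
  exact: poly_lipschitz hA ha heps hBQ hx.
set T := P.[x] * Q.[x'] - P.[x'] * Q.[x] - (wronsk P Q).[a] * h.
have -> : rat_eval P Q x - rat_eval P Q x' - rat_deriv P Q a * h =
    (T * Q.[a] ^+ 2 + (wronsk P Q).[a] * h * (Q.[a] ^+ 2 - Q.[x] * Q.[x']))
      / (Q.[x] * Q.[x'] * Q.[a] ^+ 2).
  exact: quotient_difference (nz _ hQx) (nz _ hQx') (nz _ erefl).
rewrite abs_div absM absM absX hQx hQx' -/q ler_pdivrMr ?mulr_gt0 ?exprn_gt0 //.
have -> : B ^+ 4 * eps / q ^+ 4 * abs h * (q * q * q ^+ 2) = B ^+ 4 * eps * abs h.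
  by field; rewrite gt_eqF.
have hq2 : abs (Q.[a] ^+ 2) <= B * B by rewrite absX expr2 ler_pM ?abs_ge0.
apply: absD_le.
  apply: le_trans (abs_mul_le (cross_difference_error hx hx') hq2) _.
  by rewrite le_eqVlt; apply/orP; left; apply/eqP; rewrite /h; ring.
apply: le_trans (abs_mul_le (abs_mul_le hW (lexx (abs h))) hQ2) _.
by rewrite le_eqVlt; apply/orP; left; apply/eqP; ring.
Qed.

End RationalNear.

Lemma rat_pbound (P Q : {poly K}) (A : R) : 1 <= A ->
  exists2 B : R, 1 <= B & [/\ pbound P A <= B, pbound Q A <= B,
    pbound P^`() A <= B & pbound Q^`() A <= B].
Proof.
move=> hA; have := pbound_ge0 P hA; have := pbound_ge0 Q hA.
have := pbound_ge0 P^`() hA; have := pbound_ge0 Q^`() hA => h1 h2 h3 h4.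
by exists (1 + pbound P A + pbound Q A + pbound P^`() A + pbound Q^`() A);
  [lra|split; lra].
Qed.

Lemma uniform_approx_linear (P Q : {poly K}) (A q0 w0 : R) :
  1 <= A -> 0 < q0 -> 0 < w0 ->
  exists2 eps0 : R, 0 < eps0 &
  forall a, abs a <= A -> q0 <= abs Q.[a] -> w0 <= abs (wronsk P Q).[a] ->
    (forall x, abs (x - a) < eps0 -> Q.[x] != 0) /\
    approx_linear (rat_eval P Q) a eps0 (rat_deriv P Q a) (2^-1 * abs (rat_deriv P Q a)).
Proof.
move=> hA hq0 hw0; have [B hB1 [hBP hBQ hBP' hBQ']] := rat_pbound P Q hA.
have hB0 : 0 < B by lra.
have hB4 : 0 < B ^+ 4 by rewrite exprn_gt0.
set e1 := q0 / (2 * B); set e2 := w0 * q0 ^+ 2 / (2 * B ^+ 4).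
have he1 : 0 < e1 by rewrite divr_gt0 // mulr_gt0.
have he2 : 0 < e2 by rewrite divr_gt0 ?mulr_gt0 ?exprn_gt0.
set eps0 := Num.min 1 (Num.min e1 e2).
have heps0 : 0 < eps0 by rewrite !lt_min ltr01 he1 he2.
have heps1 : eps0 <= 1 by rewrite ge_min lexx.
have hBe1 : B * eps0 <= q0 / 2.
  have -> : q0 / 2 = B * e1 by rewrite /e1; field; rewrite gt_eqF.
  by rewrite ler_wpM2l ?(ltW hB0) // !ge_min lexx orbT.
have hBe2 : B ^+ 4 * eps0 <= w0 * q0 ^+ 2 / 2.
  have -> : w0 * q0 ^+ 2 / 2 = B ^+ 4 * e2 by rewrite /e2; field; rewrite gt_eqF.
  by rewrite ler_wpM2l ?(ltW hB4) // !ge_min lexx !orbT.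
exists eps0 => // a ha hqa hwa.
have hBq : B * eps0 < abs Q.[a] by lra.
have hQx x : abs (x - a) < eps0 -> Q.[x] != 0.
  move=> hx; apply: abs_neq0.
  by rewrite (rat_denominator_stable hA ha heps1 hBQ hBq hx) gt_eqF ?(lt_le_trans hq0).
split=> //; apply: approx_linear_le (rat_approx_linear hA ha heps1 hBP hBQ hBP' hBQ' hBq).
set qa := abs Q.[a]; have hqa0 : 0 < qa := lt_le_trans hq0 hqa.
rewrite /rat_deriv abs_div absX -/qa -/(wronsk P Q).
rewrite ler_pdivrMr ?exprn_gt0 //.
have -> : 2^-1 * (abs (wronsk P Q).[a] / qa ^+ 2) * qa ^+ 4 =
  abs (wronsk P Q).[a] * qa ^+ 2 / 2 by field; rewrite gt_eqF.
apply: le_trans hBe2 _; rewrite ler_pM2r ?invr_gt0 //.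
have hq2 : q0 ^+ 2 <= qa ^+ 2 by rewrite !expr2; apply: ler_pM => //; exact: ltW.
by apply: ler_pM => //; [exact: ltW | exact: exprn_ge0 (ltW hq0)].
Qed.

Lemma rat_strongly_differentiable (P Q : {poly K}) (a : K) (c : R) :
  Q.[a] != 0 -> 0 < c ->
  exists2 eps : R, 0 < eps & approx_linear (rat_eval P Q) a eps (rat_deriv P Q a) c.
Proof.
move=> hQa hc; set A := 1 + abs a; set q := abs Q.[a].
have hA : 1 <= A by rewrite /A lerDl abs_ge0.
have ha : abs a <= A by rewrite /A lerDr.
have [B hB1 [hBP hBQ hBP' hBQ']] := rat_pbound P Q hA.
have hB0 : 0 < B by lra.
have hq : 0 < q := abs_gt0 hQa.
set eps := Num.min 1 (Num.min (q / (2 * B)) (c * q ^+ 4 / B ^+ 4)).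
have heps : 0 < eps by rewrite !lt_min ltr01 !divr_gt0 ?mulr_gt0 ?exprn_gt0.
have hBq : B * eps < q.
  apply: le_lt_trans (_ : B * (q / (2 * B)) < q).
    by rewrite ler_wpM2l ?(ltW hB0) // !ge_min lexx orbT.
  have -> : B * (q / (2 * B)) = q / 2 by field; rewrite gt_eqF.
  lra.
have heps1 : eps <= 1 by rewrite ge_min lexx.
exists eps => //.
apply: approx_linear_le (rat_approx_linear hA ha heps1 hBP hBQ hBP' hBQ' hBq).
have heps2 : eps <= c * q ^+ 4 / B ^+ 4 by rewrite !ge_min lexx !orbT.
by rewrite ler_pdivrMr ?exprn_gt0 // mulrC -ler_pdivlMr ?exprn_gt0.
Qed.

Section Seminorm.
Variable w : {poly K} -> R.
Hypothesis hw : is_berk abs w.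

Lemma wC c : w c%:P = abs c. Proof. by case: hw. Qed.
Lemma wge0 p : 0 <= w p. Proof. by case: hw. Qed.
Lemma wM p q : w (p * q) = w p * w q. Proof. by case: hw. Qed.
Lemma wD p q : w (p + q) <= w p + w q. Proof. by case: hw. Qed.

Lemma wN p : w (- p) = w p.
Proof. by rewrite -mulN1r wM -polyCN wC absN abs1 mul1r. Qed.

Lemma wB p q : w (p - q) <= w p + w q.
Proof. by apply: le_trans (wD _ _) _; rewrite wN. Qed.

Lemma wXn p n : w (p ^+ n) = w p ^+ n.
Proof. by elim: n => [|n IH]; rewrite ?expr0 -?polyC1 ?wC ?abs1 // !exprS wM IH. Qed.

Lemma w_sum (I : Type) (s : seq I) (F : I -> {poly K}) :
  w (\sum_(i <- s) F i) <= \sum_(i <- s) w (F i).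
Proof.
elim: s => [|i s IH]; first by rewrite !big_nil wC abs0.
by rewrite !big_cons; apply: le_trans (wD _ _) _; exact: lerD.
Qed.

Lemma w_poly_le (h : {poly K}) (D : R) : w 'X <= D ->
  w h <= \sum_(i < size h) abs h`_i * D ^+ i.
Proof.
move=> hX; rewrite -{1}(coefK h) poly_def; apply: le_trans (w_sum _ _) _.
apply: ler_sum => i _; rewrite -mul_polyC wM wC wXn ler_wpM2l ?abs_ge0 //.
by rewrite lerXn2r ?nnegrE ?wge0 ?(le_trans (wge0 'X)).
Qed.

Lemma w_dist_le (a c : K) : w ('X - c%:P) <= w ('X - a%:P) + abs (a - c).
Proof.
have -> : 'X - c%:P = ('X - a%:P) + (a - c)%:P by rewrite polyCB; ring.
by rewrite -wC; apply: wD.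
Qed.

End Seminorm.

Lemma typeI_continuity (c : K) (g : {poly K}) :
  exists2 C : R, 0 <= C & forall w, is_berk abs w -> w ('X - c%:P) <= 1 ->
    w g <= abs g.[c] + C * w ('X - c%:P) /\ abs g.[c] <= w g + C * w ('X - c%:P).
Proof.
have : root (g - g.[c]%:P) c by rewrite /root !hornerE subrr.
case/factor_theorem => h hh; set D := 1 + abs c.
have hD : 0 <= D by rewrite /D addr_ge0 ?ler01 ?abs_ge0.
exists (\sum_(i < size h) abs h`_i * D ^+ i).
  by apply: sumr_ge0 => i _; rewrite mulr_ge0 ?abs_ge0 ?exprn_ge0.
move=> w hw hwX.
have hX : w 'X <= D.
  have -> : ('X : {poly K}) = ('X - c%:P) + c%:P by rewrite subrK.
  by apply: le_trans (wD hw _ _) _; rewrite (wC hw) /D lerD2r.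
have hwh := ler_wpM2r (wge0 hw ('X - c%:P)) (w_poly_le hw h hX).
have hg : g = g.[c]%:P + h * ('X - c%:P) by rewrite -hh addrC subrK.
split.
  by rewrite {1}hg; apply: le_trans (wD hw _ _) _; rewrite (wC hw) (wM hw) lerD2l.
have hgc : g.[c]%:P = g - h * ('X - c%:P) by rewrite {2}hg addrK.
by rewrite -(wC hw) hgc; apply: le_trans (wB hw _ _) _; rewrite (wM hw) lerD2l.
Qed.

Lemma typeI_nbhd_disk (c : K) (s : seq ({poly K} * R * R)) :
  (forall t, t \in s -> t.1.2 < typeI abs c t.1.1 < t.2) ->
  exists2 d : R, 0 < d & forall w, is_berk abs w -> w ('X - c%:P) < d ->
    forall t, t \in s -> t.1.2 < w t.1.1 < t.2.
Proof.
elim: s => [|t s IH] hs; first by exists 1 => // w _ _ t; rewrite in_nil.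
have hs' t' : t' \in s -> t'.1.2 < typeI abs c t'.1.1 < t'.2.
  by move=> ht'; apply: hs; rewrite in_cons ht' orbT.
have [d hd hdw] := IH hs'.
have /andP [hlo hhi] := hs t (mem_head _ _); rewrite /typeI in hlo hhi.
have [C hC hCw] := typeI_continuity c t.1.1.
set m := Num.min (abs (t.1.1).[c] - t.1.2) (t.2 - abs (t.1.1).[c]).
have hm : 0 < m by rewrite /m lt_min !subr_gt0 hlo hhi.
have hm1 : m <= abs (t.1.1).[c] - t.1.2 by rewrite /m ge_min lexx.
have hm2 : m <= t.2 - abs (t.1.1).[c] by rewrite /m ge_min lexx orbT.
exists (Num.min 1 (Num.min d (m / (C + 1)))).
  by rewrite !lt_min ltr01 hd divr_gt0 //; lra.
move=> w hw; rewrite !lt_min => /and3P [hw1 hwd hwm] t'.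
rewrite in_cons => /orP [/eqP ->|ht']; last exact: hdw.
have [hu hl] := hCw w hw (ltW hw1).
have hw0 := wge0 hw ('X - c%:P).
have hCm : C * w ('X - c%:P) < m.
  by move: hwm; rewrite ltr_pdivlMr; nra.
by apply/andP; split; lra.
Qed.

Lemma fatou_open (P Q : {poly K}) (z0 : {poly K} -> R) :
  berk_fatou abs P Q (Some z0) ->
  exists s : seq ({poly K} * R * R),
    (forall t, t \in s -> t.1.2 < z0 t.1.1 < t.2) /\
    forall w, is_berk abs w -> (forall t, t \in s -> t.1.2 < w t.1.1 < t.2) ->
      berk_fatou abs P Q (Some w).
Proof.
case=> hz0 [V [hV [[s [hs hsV]] hinf]]].
exists s; split => // w hw hws.
pose V' := fun p : berkP1 R K => exists w', p = Some w' /\ is_berk abs w' /\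
   (forall t, t \in s -> t.1.2 < w' t.1.1 < t.2).
split => //; exists V'; split; first by move=> p [w' [-> [hw' _]]].
split; first by exists s; split => // w' hw' hw's; exists w'.
apply: contra_not hinf; apply: sub_finite_set => q [hq hnq]; split => //.
move=> [n [p' [[w' [-> [hw' hw's]]] hq']]]; apply: hnq.
by exists n, (Some w'); split => //; exact: hsV.
Qed.

Lemma fatou_typeI_disk (P Q : {poly K}) (c : K) :
  berk_fatou abs P Q (Some (typeI abs c)) ->
  exists2 d : R, 0 < d & forall w, is_berk abs w -> w ('X - c%:P) < d ->
    berk_fatou abs P Q (Some w).
Proof.
move=> /fatou_open [s [hs hsw]]; have [d hd hdw] := typeI_nbhd_disk hs.
by exists d => // w hw hwd; apply: hsw => //; apply: hdw.
Qed.

Lemma fatou_infinity (P Q : {poly K}) :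
  berk_fatou abs P Q None ->
  exists M : R, forall w, is_berk abs w -> M < w 'X -> berk_fatou abs P Q (Some w).
Proof.
case=> _ [V [hV [[M [hVN hMV]] hinf]]]; exists M => w hw hwM.
pose V' := fun p : berkP1 R K => exists w', p = Some w' /\ is_berk abs w' /\ M < w' 'X.
split => //; exists V'; split; first by move=> p [w' [-> [hw' _]]].
split.
  exists [:: ('X, M, w 'X + 1)]; split.
    by move=> t; rewrite inE => /eqP -> /=; rewrite hwM /=; lra.
  move=> w' hw' hw's; exists w'; split => //; split => //.
  by have /andP [] := hw's _ (mem_head _ _).
apply: contra_not hinf; apply: sub_finite_set => q [hq hnq]; split => //.
move=> [n [p' [[w' [-> [hw' hw's]]] hq']]]; apply: hnq.
by exists n, (Some w'); split => //; exact: hMV.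
Qed.

Lemma julia_root_bounds (P Q p : {poly K}) : p != 0 ->
  (forall c, root p c -> berk_fatou abs P Q (Some (typeI abs c))) ->
  exists2 d : R, 0 < d & exists2 m : R, 0 < m &
    forall a, (exists z, berk_disk abs a d z /\ berk_julia abs P Q (Some z)) ->
      m <= abs p.[a].
Proof.
move=> hp hfat; have [rs hrs] := closed_field_poly_normal p.
have [del hdel hball] : exists2 del : R, 0 < del & forall c, c \in rs ->
    forall w, is_berk abs w -> w ('X - c%:P) < del -> berk_fatou abs P Q (Some w).
  have : forall c, c \in rs -> berk_fatou abs P Q (Some (typeI abs c)).
    by move=> c hc; apply: hfat; rewrite /root (root_of_factor hrs hc).
  elim: rs {hrs} => [|c rs IH] hcs; first by exists 1 => // c; rewrite in_nil.
  have [d1 hd1 h1] : exists2 d1 : R, 0 < d1 & forall c', c' \in rs ->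
      forall w, is_berk abs w -> w ('X - c'%:P) < d1 -> berk_fatou abs P Q (Some w).
    by apply: IH => c' hc'; apply: hcs; rewrite in_cons hc' orbT.
  have [d2 hd2 h2] := fatou_typeI_disk (hcs c (mem_head _ _)).
  exists (Num.min d1 d2); first by rewrite lt_min hd1 hd2.
  move=> c'; rewrite in_cons => /orP [/eqP ->|hc'] w hw hwd.
    by apply: h2 => //; apply: lt_le_trans hwd _; rewrite ge_min lexx orbT.
  by apply: (h1 c') => //; apply: lt_le_trans hwd _; rewrite ge_min lexx.
have hd : 0 < del / 2 by rewrite divr_gt0.
exists (del / 2) => //; exists (abs (lead_coef p) * (del / 2) ^+ size rs).
  by rewrite mulr_gt0 ?exprn_gt0 ?abs_gt0 ?lead_coef_eq0.
move=> a [z [[hz hza] [_ hnf]]].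
have hdist c : c \in rs -> del / 2 <= abs (a - c).
  move=> hc; rewrite leNgt; apply/negP => hlt; apply: hnf; apply: (hball c hc z hz).
  by apply: le_lt_trans (w_dist_le hz a c) _; lra.
rewrite {2}hrs hornerZ horner_prod absM abs_prod ler_wpM2l ?abs_ge0 //.
elim: rs {hrs hball} hdist => [|c rs IH] hdist; first by rewrite big_nil expr0.
rewrite big_cons exprS; apply: ler_pM; [exact: ltW | exact: exprn_ge0 (ltW hd) | |].
  by rewrite hornerXsubC; apply: hdist; rewrite mem_head.
by apply: IH => c' hc'; apply: hdist; rewrite in_cons hc' orbT.
Qed.

Section Complete.
Hypothesis hcompl : abs_complete abs.

Lemma contraction_iterates (G : K -> K) (a : K) (s rho : R) :
  0 <= s -> s < rho ->
  (forall x x', abs (x - a) < rho -> abs (x' - a) < rho ->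
     abs (G x - G x') <= 2^-1 * abs (x - x')) ->
  abs (G a - a) <= s ->
  (forall n, abs (iter n G a - a) <= s) /\
  (forall N m, (N <= m)%N -> abs (iter m G a - iter N G a) <= (2^-1) ^+ N * s).
Proof.
move=> hs hsr hG hGa.
have ha : abs (a - a) < rho by rewrite subrr abs0; exact: le_lt_trans hs hsr.
have hhalf : (2^-1 : R) <= 1 by rewrite invf_le1 ?ler1n.
have Gin x : abs (x - a) <= s -> abs (G x - a) <= s.
  move=> hx; apply: (dist_trans_le (y := G a)) => //.
  apply: le_trans (hG _ _ (le_lt_trans hx hsr) ha) _.
  by apply: le_trans _ hx; rewrite ler_piMl ?abs_ge0.
have uin n : abs (iter n G a - a) <= s.
  by elim: n => [|n IH]; rewrite ?subrr ?abs0 //= Gin.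
have ustep n : abs (iter n.+1 G a - iter n G a) <= (2^-1) ^+ n * s.
  elim: n => [|n IH]; first by rewrite expr0 mul1r.
  have := hG (iter n.+1 G a) (iter n G a) (le_lt_trans (uin _) hsr) (le_lt_trans (uin _) hsr).
  move=> /le_trans; apply.
  by rewrite exprS -mulrA ler_pM2l ?invr_gt0.
have hbound N : 0 <= (2^-1 : R) ^+ N * s.
  by apply: mulr_ge0 => //; apply: exprn_ge0; rewrite invr_ge0.
split=> // N; elim=> [|m IH]; first by rewrite leqn0 => /eqP ->; rewrite subrr abs0.
rewrite leq_eqVlt => /orP [/eqP <-|]; first by rewrite subrr abs0.
rewrite ltnS => hNm; apply: (dist_trans_le (y := iter m G a)); last exact: IH.
apply: le_trans (ustep m) _; rewrite ler_wpM2r //.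
by rewrite -(subnK hNm) exprD ler_piMl ?exprn_ge0 ?exprn_ile1 ?invr_ge0.
Qed.

Lemma contraction_fixpoint (G : K -> K) (a : K) (s rho : R) :
  0 <= s -> s < rho ->
  (forall x x', abs (x - a) < rho -> abs (x' - a) < rho ->
     abs (G x - G x') <= 2^-1 * abs (x - x')) ->
  abs (G a - a) <= s -> exists2 l, abs (l - a) < rho & G l = l.
Proof.
move=> hs hsr hG hGa.
have [uin ucauchy] := contraction_iterates hs hsr hG hGa.
have hrho : 0 < rho := le_lt_trans hs hsr.
have small e : 0 < e -> exists N : nat, (2^-1 : R) ^+ N * s < e.
  move=> he; have hs1 : 0 < s + 1 by lra.
  have [N hN] : exists N : nat, (2^-1 : R) ^+ N < e / (s + 1).
    by apply: geometric_small; rewrite ?invr_ge0 ?invf_lt1 ?ltr1n ?divr_gt0.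
  exists N; rewrite ltr_pdivlMr // in hN; apply: le_lt_trans hN.
  by rewrite ler_wpM2l ?exprn_ge0 ?invr_ge0 ?lerDl.
have [l hl] : exists l, forall e : R, 0 < e -> exists N, forall n, (N <= n)%N ->
    abs (iter n G a - l) < e.
  apply: hcompl => e he; have [N hN] := small e he; exists N => m n hm hn.
  apply: le_lt_trans hN; apply: (dist_trans_le (y := iter N G a)); first exact: ucauchy.
  by rewrite abs_subC; exact: ucauchy.
have hlrho : abs (l - a) < rho.
  have [N hN] := hl rho hrho; apply: (dist_trans_lt (y := iter N G a)).
    by rewrite abs_subC; exact: hN.
  exact: le_lt_trans (uin N) hsr.
exists l => //.
apply/eqP; rewrite -subr_eq0; apply/eqP/abs_eq0/eqP.
rewrite eq_le abs_ge0 andbT leNgt; apply/negP => hpos.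
have [N hN] := hl _ hpos.
have h1 : abs (G l - iter N.+1 G a) < abs (G l - l).
  apply: le_lt_trans (hG l (iter N G a) hlrho (le_lt_trans (uin N) hsr)) _.
  by apply: le_lt_trans (hN N (leqnn N)); rewrite abs_subC ler_piMl ?abs_ge0 ?invf_le1 ?ler1n.
by have := dist_trans_lt h1 (hN N.+1 (leqnSn N)); rewrite ltxx.
Qed.

Lemma approx_linear_bij f a eps L : 0 < eps -> L != 0 ->
  approx_linear f a eps L (2^-1 * abs L) ->
  forall r, 0 < r -> r <= eps -> set_bij (disk abs a r) (disk abs (f a) (abs L * r)) f.
Proof.
move=> heps hL hf r hr hre; have hLp := abs_gt0 hL.
have hsub x : abs (x - a) < r -> abs (x - a) < eps by move=> /lt_le_trans; apply.
have ha : abs (a - a) < eps by rewrite subrr abs0.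
split.
- move=> x /= hx; rewrite /disk /= (approx_linear_dist hL hf (hsub _ hx) ha).
  by rewrite ltr_pM2l.
- move=> x x'; rewrite /disk !inE /= => hx hx' hfx.
  have := approx_linear_dist hL hf (hsub _ hx) (hsub _ hx').
  rewrite hfx subrr abs0 => /esym/eqP; rewrite mulf_eq0 gt_eqF //= => /eqP/abs_eq0.
  by move/eqP; rewrite subr_eq0 => /eqP.
move=> y; rewrite /disk /= => hy.
pose G x := x - (f x - y) / L.
have hG x x' : abs (x - a) < r -> abs (x' - a) < r ->
    abs (G x - G x') <= 2^-1 * abs (x - x').
  move=> hx hx'; have -> : G x - G x' = - ((f x - f x' - L * (x - x')) / L).
    by rewrite /G; field.
  by rewrite absN abs_div ler_pdivrMr // mulrAC; apply: hf; apply: hsub.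
have hGa : abs (G a - a) <= abs (y - f a) / abs L.
  by rewrite /G addrAC subrr add0r -mulNr opprB abs_div.
have hsr : abs (y - f a) / abs L < r by rewrite ltr_pdivrMr // mulrC.
have [l hl hGl] := contraction_fixpoint (divr_ge0 (abs_ge0 _) (ltW hLp)) hsr hG hGa.
exists l => //; move/eqP: hGl; rewrite /G subr_eq addrC -subr_eq subrr eq_sym.
by rewrite mulf_eq0 invr_eq0 (negbTE hL) orbF subr_eq0 => /eqP.
Qed.

Definition bij_on_disk (P Q : {poly K}) (a : K) (r : R) : Prop :=
  (forall x, disk abs a r x -> Q.[x] != 0) /\
  set_bij (disk abs a r) (disk abs (rat_eval P Q a) (abs (rat_deriv P Q a) * r))
    (rat_eval P Q).


Lemma bij_on_disk_of_approx (P Q : {poly K}) (a : K) (eps : R) (L : K) :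
  0 < eps -> L != 0 -> (forall x, abs (x - a) < eps -> Q.[x] != 0) ->
  approx_linear (rat_eval P Q) a eps L (2^-1 * abs L) ->
  abs (rat_deriv P Q a) = abs L ->
  forall r, 0 < r -> r <= eps -> bij_on_disk P Q a r.
Proof.
move=> heps hL hQ hf hderiv r hr hre; split.
  by move=> x hx; apply: hQ; exact: lt_le_trans hx hre.
by rewrite hderiv; exact: approx_linear_bij heps hL hf r hr hre.
Qed.

Lemma near_region_bij (P Q : {poly K}) (A q0 w0 : R) :
  1 <= A -> 0 < q0 -> 0 < w0 ->
  exists2 eps0 : R, 0 < eps0 &
  forall a, abs a <= A -> q0 <= abs Q.[a] -> w0 <= abs (wronsk P Q).[a] ->
    forall r, 0 < r -> r <= eps0 -> bij_on_disk P Q a r.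
Proof.
move=> hA hq0 hw0; have [eps0 heps0 hloc] := uniform_approx_linear P Q hA hq0 hw0.
exists eps0 => // a ha hqa hwa; have [hQ hf] := hloc a ha hqa hwa.
have hQa : Q.[a] != 0 by apply: abs_neq0; rewrite gt_eqF ?(lt_le_trans hq0).
have hWa : (wronsk P Q).[a] != 0 by apply: abs_neq0; rewrite gt_eqF ?(lt_le_trans hw0).
have hL : rat_deriv P Q a != 0 by rewrite /rat_deriv mulf_neq0 ?invr_eq0 ?expf_neq0.
exact: bij_on_disk_of_approx heps0 hL hQ hf erefl.
Qed.

(* Points far from the origin, when infinity is neither a pole nor a
   critical point: there f(z) = g(1/z) with g regular and unramified at 0. *)
Lemma far_region_bij (P Q : {poly K}) : Q != 0 -> (size P <= size Q)%N ->
  (wronsk (revd (ratdeg P Q) P) (revd (ratdeg P Q) Q)).[0] != 0 ->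
  exists2 A0 : R, 1 <= A0 &
  forall a, A0 <= abs a -> forall r, 0 < r -> r <= 1 -> bij_on_disk P Q a r.
Proof.
move=> hQ hsz hWr; set d := ratdeg P Q.
have hsQ : size Q = d.+1.
  by rewrite /d /ratdeg (maxn_idPr hsz) prednK // lt0n size_poly_eq0.
have hsP : (size P <= d.+1)%N by rewrite -hsQ.
have hsQ' : (size Q <= d.+1)%N by rewrite hsQ.
set Pr := revd d P; set Qr := revd d Q; set g := rat_eval Pr Qr.
have hQr0 : Qr.[0] != 0.
  by rewrite /Qr revd_horner0 -[d]/(d.+1.-1) -hsQ -lead_coefE lead_coef_eq0.
have [eps0 heps0 hloc] := uniform_approx_linear Pr Qr (lexx 1) (abs_gt0 hQr0) (abs_gt0 hWr).
have h01 : abs (0 : K) <= 1 by rewrite abs0 ler01.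
have [hQr hg] := hloc 0 h01 (lexx _) (lexx _).
set L0 := rat_deriv Pr Qr 0.
have hL0 : L0 != 0 by rewrite /L0 /rat_deriv mulf_neq0 ?invr_eq0 ?expf_neq0.
have hinv : 0 < eps0^-1 by rewrite invr_gt0.
exists (2 + eps0^-1); first lra.
move=> a ha; have ha0 : 0 < abs a by lra.
have hxa x : abs (x - a) < 1 -> abs x = abs a.
  by move=> hx; apply: abs_isosceles; apply: lt_le_trans hx _; lra.
have hx0 x : abs (x - a) < 1 -> x != 0.
  by move=> hx; apply: abs_neq0; rewrite hxa // gt_eqF.
have hxinv x : abs (x - a) < 1 -> abs (x^-1 - 0) < eps0.
  move=> hx; rewrite subr0 absV hxa // -[eps0]invrK ltf_pV2 ?posrE //; lra.
have hQx x : abs (x - a) < 1 -> Q.[x] != 0.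
  move=> hx; rewrite -(revd_horner (hx0 _ hx) hsQ') mulf_neq0 ?expf_neq0 ?(hx0 _ hx) //.
  exact: hQr (hxinv _ hx).
set L := - L0 / a ^+ 2.
have hL : L != 0 by rewrite mulf_neq0 ?oppr_eq0 ?invr_eq0 ?expf_neq0 // abs_neq0 ?gt_eqF.
have hf : approx_linear (rat_eval P Q) a 1 L (2^-1 * abs L).
  move=> x x' hx hx'; rewrite !(rat_eval_revd _ hsP hsQ') ?hx0 //.
  exact: (approx_linear_inv heps0 hg ha).
have hLp : 0 < abs L := abs_gt0 hL.
have haa : abs (a - a) < 1 by rewrite subrr abs0.
have hc : 0 < 2^-1 * abs L by rewrite mulr_gt0 ?invr_gt0.
have hcL : 2^-1 * abs L < abs L by rewrite gtr_pMl ?invf_lt1 ?ltr1n.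
have [e he hf'] := rat_strongly_differentiable P (hQx a haa) hc.
exact: bij_on_disk_of_approx ltr01 hL hQx hf
  (approx_linear_abs_unique ltr01 he hcL hcL hf hf').
Qed.

Lemma infinity_dichotomy (P Q : {poly K}) : Q != 0 ->
  (is_pole P Q None -> berk_fatou abs P Q None) ->
  (is_crit P Q None -> berk_fatou abs P Q None) ->
  exists2 A : R, 1 <= A &
    (forall a, (exists z, berk_disk abs a 1 z /\ berk_julia abs P Q (Some z)) ->
       abs a <= A) \/
    (forall a, A <= abs a -> forall r, 0 < r -> r <= 1 -> bij_on_disk P Q a r).
Proof.
move=> hQ hpole hcrit.
have [hinf|hreg] := pselect (is_pole P Q None \/ is_crit P Q None).
  have [M hM] : exists M : R, forall w, is_berk abs w -> M < w 'X ->
      berk_fatou abs P Q (Some w).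
    by apply: fatou_infinity; case: hinf => [/hpole|/hcrit].
  exists (Num.max 1 (M + 1)); first by rewrite le_max lexx.
  left => a [z [[hz hza] [_ hnf]]].
  have hzX : z 'X <= M by rewrite leNgt; apply/negP => hlt; apply: hnf; exact: hM.
  have : abs a <= z 'X + z ('X - a%:P).
    by rewrite -(wC hz a) -{1}(subKr 'X a%:P); apply: wB.
  by rewrite le_max => h; apply/orP; right; lra.
have hsz : (size P <= size Q)%N.
  by rewrite leqNgt; apply/negP => hlt; apply: hreg; left; rewrite /is_pole /= hlt.
have hWr : (wronsk (revd (ratdeg P Q) P) (revd (ratdeg P Q) Q)).[0] != 0.
  by apply/negP => h; apply: hreg; right.
by have [A0 hA0 hfar] := far_region_bij hQ hsz hWr; exists A0 => //; right.
Qed.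

End Complete.

End NonArchimedean.

Unset Implicit Arguments.

Theorem lemma4p3 (R : realType) (K : closedFieldType) (abs : K -> R)
  (habs : is_nonarch_abs abs) (hcompl : abs_complete abs)
  (hchar : [pchar K] =i pred0)
  (P Q : {poly K}) (hQ : Q != 0) (hcop : coprimep P Q)
  (hnc : (1 <= ratdeg P Q)%N)
  (hpoles : forall x : option K, is_pole P Q x ->
              berk_fatou abs P Q (typeI_P1 abs x))
  (hcrit : forall x : option K, is_crit P Q x ->
              berk_fatou abs P Q (typeI_P1 abs x)) :
  exists eps : R, 0 < eps /\
    forall a : K,
      (exists z, berk_disk abs a eps z /\ berk_julia abs P Q (Some z)) ->
      forall r : R, 0 < r -> r <= eps ->
        (forall x, disk abs a r x -> Q.[x] != 0) /\
        set_bij (disk abs a r)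
                (disk abs (rat_eval P Q a) (abs (rat_deriv P Q a) * r))
                (rat_eval P Q).
Proof.
have hW := wronsk_neq0 hchar hQ hcop hnc.
have hpolesQ c : root Q c -> berk_fatou abs P Q (Some (typeI abs c)).
  by move=> hc; apply: (hpoles (Some c)); rewrite /is_pole /= (rootP hc) eqxx.
have [dQ hdQ [mQ hmQ hQa]] := julia_root_bounds habs hQ hpolesQ.
have [dW hdW [mW hmW hWa]] := julia_root_bounds habs hW (fun c => hcrit (Some c)).
have [A hA hinf] := infinity_dichotomy habs hcompl hQ (hpoles None) (hcrit None).
have [eps0 heps0 hnear] := near_region_bij habs hcompl P Q hA hmQ hmW.
set eps := Num.min (Num.min dQ dW) (Num.min 1 eps0).
have [/andP [hedQ hedW] /andP [he1 he0]] : (eps <= dQ) && (eps <= dW) /\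
    (eps <= 1) && (eps <= eps0) by rewrite /eps !ge_min !lexx !orbT.
exists eps; split; first by rewrite !lt_min hdQ hdW ltr01 heps0.
move=> a hjul r hr hre.
have near d : eps <= d -> exists z, berk_disk abs a d z /\ berk_julia abs P Q (Some z).
  by case: hjul => z [[hz hza] hz']; exists z; split => //; split => //; lra.
have hbd : abs a <= A -> bij_on_disk abs P Q a r.
  move=> haA; exact: (hnear a haA (hQa a (near _ hedQ)) (hWa a (near _ hedW)) r hr
    (le_trans hre he0)).
case: hinf => [hbdd|hfar]; first exact/hbd/hbdd/near.
have [haA|haA] := leP (abs a) A; first exact: hbd.
exact: (hfar a (ltW haA) r hr (le_trans hre he1)).
Qed.
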